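(* Fix matrices $A\in\mathbb{R}^{n_s\times n_s}$, $B\in\mathbb{R}^{n_s\times n_a}$, a vector $\mathbf b\in\mathbb{R}^{n_s}$ and an integer $q\ge 1$. Let $\mathcal{D}=\{(\mathbf s_k,\mathbf a_k,\mathbf s_{k+1})\}_{k=1}^{n}$ be a finite set of observed state transitions with $\mathbf s_k,\mathbf s_{k+1}\in\mathbb{R}^{n_s}$, $\mathbf a_k\in\mathbb{R}^{n_a}$. For a transition $(\mathbf s,\mathbf a,\mathbf s_+)$ define its noise $\mathbf w:=\mathbf s_+-(A\mathbf s+B\mathbf a+\mathbf b)$, and for any subset $\hat{\mathcal D}\subseteq\mathcal D$ let $\mathcal{W}(\hat{\mathcal D})$ be the set of noises of its transitions and $$\mathcal{S}_{\hat{\mathcal D}}:=\{\theta=(M,\mathbf m)\in\mathbb{R}^{q\times n_s}\times\mathbb{R}^q\ :\ M\mathbf w\le\mathbf m\ \ \forall\,\mathbf w\in\mathcal{W}(\hat{\mathcal D})\}.$$ Call $\bar{\mathcal D}\subseteq\mathcal D$ an optimal data compression if $\mathcal{S}_{\bar{\mathcal D}}=\mathcal{S}_{\mathcal D}$ and $|\bar{\mathcal D}|=\min\{|\hat{\mathcal D}|:\hat{\mathcal D}\subseteq\mathcal D,\ \mathcal{S}_{\hat{\mathcal D}}=\mathcal{S}_{\mathcal D}\}$. Let $\bar{\mathcal D}\subseteq\mathcal D$ consist of exactly one transition for each vertex (extreme point) of the convex hull $\mathrm{Conv}(\mathcal{W}(\mathcal D))$, namely a transition whose noise equals that vertex (so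 that $\mathcal W(\bar{\mathcal D})$ is the vertex representation of $\mathrm{Conv}(\mathcal W(\mathcal D))$). Then $\bar{\mathcal D}$ is an optimal data compression.
   Context: This formalizes the paper's statement that, for the polytopic dispersion-set parametrization $\hat{\mathbf S}_+(\mathbf s,\mathbf a,\theta)=\{A\mathbf s+B\mathbf a+\mathbf b+\mathbf w: M\mathbf w\le\mathbf m\}$ with fixed nominal model $(A,B,\mathbf b)$, the convex hull (in vertex representation) of the observed noise samples is an optimal data compression, i.e., a minimum-cardinality subset of the data defining the same set $\mathcal S$ of admissible parameters $\theta=(M,\mathbf m)$ (the ''safe design constraint'' set). *)

From HB Require Import structures.
From mathcomp Require Import all_boot all_order all_algebra.
From mathcomp Require Import finmap.
From mathcomp Require Import reals.
Set Implicit Arguments. Unset Strict Implicit. Unset Printing Implicit Defensive.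
Import Order.TTheory GRing.Theory Num.Theory.
Local Open Scope ring_scope.
Local Open Scope fset_scope.

Definition transition (R : realType) (ns na : nat) : Type :=
  ('cV[R]_ns * 'cV[R]_na * 'cV[R]_ns)%type.

Definition noise (R : realType) (ns na : nat)
  (A : 'M[R]_ns) (B : 'M[R]_(ns, na)) (b : 'cV[R]_ns)
  (t : transition R ns na) : 'cV[R]_ns :=
  t.2 - (A *m t.1.1 + B *m t.1.2 + b).

Definition Wset (R : realType) (ns na : nat)
  (A : 'M[R]_ns) (B : 'M[R]_(ns, na)) (b : 'cV[R]_ns)
  (Dh : {fset transition R ns na}) : {fset 'cV[R]_ns} :=
  [fset noise A B b t | t in Dh].

Definition in_S (R : realType) (ns na q : nat)
  (A : 'M[R]_ns) (B : 'M[R]_(ns, na)) (b : 'cV[R]_ns)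
  (Dh : {fset transition R ns na}) (theta : 'M[R]_(q, ns) * 'cV[R]_q) : Prop :=
  forall w, w \in Wset A B b Dh -> forall i : 'I_q, (theta.1 *m w) i 0 <= theta.2 i 0.

Definition same_S (R : realType) (ns na q : nat)
  (A : 'M[R]_ns) (B : 'M[R]_(ns, na)) (b : 'cV[R]_ns)
  (D1 D2 : {fset transition R ns na}) : Prop :=
  forall theta : 'M[R]_(q, ns) * 'cV[R]_q,
    in_S A B b D1 theta <-> in_S A B b D2 theta.

Definition in_conv (R : realType) (ns : nat) (W : {fset 'cV[R]_ns}) (x : 'cV[R]_ns) : Prop :=
  exists lam : 'cV[R]_ns -> R,
    (forall w, w \in W -> 0 <= lam w) /\
    \sum_(w <- W) lam w = 1 /\
    x = \sum_(w <- W) lam w *: w.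

Definition is_vertex (R : realType) (ns : nat) (W : {fset 'cV[R]_ns}) (x : 'cV[R]_ns) : Prop :=
  in_conv W x /\
  forall (y z : 'cV[R]_ns) (t : R), in_conv W y -> in_conv W z ->
    0 < t < 1 -> x = (t *: y + (1 - t) *: z)%R -> y = x /\ z = x.

Definition optimal_compression (R : realType) (ns na q : nat)
  (A : 'M[R]_ns) (B : 'M[R]_(ns, na)) (b : 'cV[R]_ns)
  (D Dbar : {fset transition R ns na}) : Prop :=
  Dbar `<=` D /\ same_S q A B b Dbar D /\
  forall Dh : {fset transition R ns na},
    Dh `<=` D -> same_S q A B b Dh D -> (#|` Dbar| <= #|` Dh|)%N.

From HB Require Import structures.
From mathcomp Require Import all_boot all_order all_algebra.
From mathcomp Require Import finmap.
From mathcomp Require Import reals.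
From mathcomp Require Import lra.
Set Implicit Arguments. Unset Strict Implicit. Unset Printing Implicit Defensive.
Import Order.TTheory GRing.Theory Num.Theory.
Local Open Scope ring_scope.

(* Let W = W(D) and let V be the vertex set of Conv(W), so that W(Dbar) = V.

   Every linear functional attains its maximum over W at a vertex: maximize u
   over W, then each coordinate in turn; the lexicographic maximizer is a single
   point x, and any segment of Conv(W) through x stays in the successive faces,
   hence degenerates to x.  So a constraint M_i w <= m_i that holds on V holds on
   all of W, i.e. S(Dbar) = S(D).

   Conversely, if Dh <= D and a vertex v is not a noise of Dh, then v is not in
   Conv(W(Dh)) (it would otherwise be an interior point of a segment of Conv(W)),
   so by Farkas' lemma (via Fourier-Motzkin elimination) some inequality
   u.w <= c holds on W(Dh) but fails at v.  Using it in every row gives a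
   parameter in S(Dh) but not in S(D).  Hence S(Dh) = S(D) forces V <= W(Dh),
   and |Dh| >= |W(Dh)| >= |V| = |Dbar|. *)

Lemma big_seq_pred1 (T : eqType) (V : nmodType) (s : seq T) x (G : T -> V) :
  uniq s -> x \in s -> \sum_(w <- s) G w *+ (w == x) = G x.
Proof.
move=> s_uniq xs; rewrite (big_rem x) //= eqxx mulr1n big1_seq ?addr0 //.
by move=> w /andP [_]; rewrite (mem_rem_uniq _ s_uniq) inE => /andP [/negbTE ->].
Qed.

Section Farkas.
Variables (F : realFieldType) (n : nat).
Implicit Types (u v : 'rV[F]_n) (a b x y z : 'cV[F]_n) (s : seq 'cV[F]_n).

Definition vdot u x : F := (u *m x) 0 0.

Lemma vdotDr u x y : vdot u (x + y) = vdot u x + vdot u y.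
Proof. by rewrite /vdot mulmxDr mxE. Qed.

Lemma vdotBr u x y : vdot u (x - y) = vdot u x - vdot u y.
Proof. by rewrite /vdot mulmxBr !mxE. Qed.

Lemma vdotZr u (c : F) x : vdot u (c *: x) = c * vdot u x.
Proof. by rewrite /vdot -scalemxAr mxE. Qed.

Lemma vdotBl u v x : vdot (u - v) x = vdot u x - vdot v x.
Proof. by rewrite /vdot mulmxBl !mxE. Qed.

Lemma vdotZl (c : F) u x : vdot (c *: u) x = c * vdot u x.
Proof. by rewrite /vdot -scalemxAl mxE. Qed.

Lemma vdotNl u x : vdot (- u) x = - vdot u x.
Proof. by rewrite /vdot mulNmx mxE. Qed.

Lemma vdot0r u : vdot u 0 = 0.
Proof. by rewrite /vdot mulmx0 mxE. Qed.

Lemma vdot_sumr u s (lam : 'cV[F]_n -> F) :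
  vdot u (\sum_(w <- s) lam w *: w) = \sum_(w <- s) lam w * vdot u w.
Proof.
by rewrite /vdot mulmx_sumr summxE; apply: eq_bigr => w _; rewrite -scalemxAr mxE.
Qed.

Lemma vdot_trN_lt0 x : x != 0 -> vdot (- x^T) x < 0.
Proof.
move=> nz_x; rewrite /vdot mulNmx mxE oppr_lt0 mxE lt_def.
have sqr_ge0 i : 0 <= x^T 0 i * x i 0 by rewrite mxE -expr2 sqr_ge0.
rewrite sumr_ge0 ?andbT //; apply: contra nz_x => /eqP /psumr_eq0P x0.
apply/eqP/matrixP => i j; rewrite ord1 !mxE.
by have /eqP := x0 (fun i _ => sqr_ge0 i) i isT; rewrite mxE mulf_eq0 orbb => /eqP.
Qed.

Fixpoint in_cone s b : Prop :=
  if s is a :: s' then exists2 c, 0 <= c & in_cone s' (b - c *: a) else b = 0.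

Definition hproj v a x := vdot v a *: x - vdot v x *: a.

Lemma vdot_hproj u v a x :
  vdot u (hproj v a x) = vdot (vdot v a *: u - vdot u a *: v) x.
Proof. by rewrite /hproj vdotBr !vdotZr vdotBl !vdotZl (mulrC (vdot v x)). Qed.

Lemma in_cone_hproj v a s x :
  (forall w, w \in s -> 0 <= vdot v w) -> in_cone (map (hproj v a) s) x ->
  exists2 z, in_cone s z & exists2 e, 0 <= e & x = vdot v a *: z - e *: a.
Proof.
elim: s x => [|w s IH] x /= vs_ge0.
  by move=> ->; exists 0 => //; exists 0; rewrite ?scaler0 ?scale0r ?subr0.
have s_ge0 w' : w' \in s -> 0 <= vdot v w' by move=> ws; rewrite vs_ge0 // inE ws orbT.
case=> c c_ge0 /(IH _ s_ge0) [z zs [e e_ge0 hx]].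
exists (z + c *: w); first by exists c; rewrite ?addrK.
exists (e + c * vdot v w); first by rewrite addr_ge0 ?mulr_ge0 ?vs_ge0 ?mem_head.
rewrite -[x](subrK (c *: hproj v a w)) hx /hproj scalerDr scalerDl.
by rewrite scalerDr scalerN !scalerA (mulrC c (vdot v a)) opprD addrACA.
Qed.

Lemma in_cone_cons_hproj v a s b :
  vdot v a < 0 -> vdot v b < 0 -> (forall w, w \in s -> 0 <= vdot v w) ->
  in_cone (map (hproj v a) s) (hproj v a b) -> in_cone (a :: s) b.
Proof.
move=> va_lt0 vb_lt0 /in_cone_hproj /[apply] -[z zs [e e_ge0 hb]].
exists ((vdot v b - e) / vdot v a); first by rewrite mulr_le0 ?invr_le0; lra.
suff -> : b - (vdot v b - e) / vdot v a *: a = z by [].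
apply: (scalerI (ltr0_neq0 va_lt0)).
rewrite scalerBr scalerA mulrCA mulfV ?ltr0_neq0 // mulr1 scalerBl opprB addrA addrAC.
by rewrite -[_ - _ *: a]/(hproj v a b) hb subrK.
Qed.

Lemma farkas s b : ~ in_cone s b ->
  exists u, (forall a, a \in s -> 0 <= vdot u a) /\ vdot u b < 0.
Proof.
move: {2}(size s) (erefl (size s)) => k.
elim: k s b => [|k IH] [|a s] b //= => [_|[sz]] nb.
  by exists (- b^T); split => //; apply/vdot_trN_lt0/eqP.
have nb' : ~ in_cone s b by move=> sb; apply: nb; exists 0; rewrite ?scale0r ?subr0.
have [u' [u's u'b]] := IH _ _ sz nb'.
have [u'a|u'a] := leP 0 (vdot u' a).
  by exists u'; split => // w; rewrite inE => /predU1P [->|/u's].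
(* Eliminate [a] by projecting along it onto the hyperplane [vdot u' _ = 0]. *)
have /IH [|u'' [u''s u''b]] : ~ in_cone (map (hproj u' a) s) (hproj u' a b).
- exact/(contra_not (in_cone_cons_hproj u'a u'b u's)).
- by rewrite size_map.
exists (vdot u' a *: u'' - vdot u'' a *: u'); rewrite -vdot_hproj; split => // w.
rewrite -vdot_hproj inE => /predU1P [->|ws]; first by rewrite /hproj subrr vdot0r.
exact/u''s/map_f.
Qed.

End Farkas.

Section ConvexHull.
Variables (F : realFieldType) (n : nat).
Implicit Types (u : 'rV[F]_n) (x y z w : 'cV[F]_n) (s : seq 'cV[F]_n).

Definition in_hull s x := exists lam : 'cV[F]_n -> F,
  (forall w, w \in s -> 0 <= lam w) /\
  \sum_(w <- s) lam w = 1 /\ x = \sum_(w <- s) lam w *: w.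

Lemma in_hull_mem s x : uniq s -> x \in s -> in_hull s x.
Proof.
move=> s_uniq xs; exists (fun w => (w == x)%:R); split => [w _|]; first exact: ler0n.
split; first exact: (big_seq_pred1 (fun=> 1)).
by under eq_bigr do rewrite scaler_nat; rewrite big_seq_pred1.
Qed.

Lemma hull_vdot_le s u c y :
  in_hull s y -> (forall w, w \in s -> vdot u w <= c) -> vdot u y <= c.
Proof.
move=> [lam [lam_ge0 [lam1 ->]]] le_c; rewrite vdot_sumr.
rewrite -[c]mul1r -lam1 mulr_suml !big_seq; apply: ler_sum => w ws.
by rewrite ler_wpM2l ?lam_ge0 ?le_c.
Qed.

Lemma hull_filter s u c y (P : pred 'cV[F]_n) :
  in_hull s y -> (forall w, w \in s -> vdot u w <= c) -> vdot u y = c ->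
  (forall w, w \in s -> vdot u w = c -> P w) -> in_hull (filter P s) y.
Proof.
move=> [lam [lam_ge0 [lam1 yE]]] le_c uy face_P.
have gap_ge0 w : w \in s -> 0 <= lam w * (c - vdot u w).
  by move=> ws; rewrite mulr_ge0 ?lam_ge0 ?subr_ge0 ?le_c.
have : \sum_(w <- s | w \in s) lam w * (c - vdot u w) == 0.
  rewrite -big_seq; under eq_bigr do rewrite mulrBr.
  by rewrite sumrB -mulr_suml lam1 mul1r -vdot_sumr -yE uy subrr.
rewrite psumr_eq0 // => /allP gap0.
have lam0 w : w \in s -> ~~ P w -> lam w = 0.
  move=> ws; apply: contraNeq => lam_neq0; apply: face_P => //.
  move: (gap0 w ws); rewrite ws mulf_eq0 (negbTE lam_neq0) subr_eq0 => /eqP.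
  by move->.
exists lam; split => [w|]; first by rewrite mem_filter => /andP [_ /lam_ge0].
rewrite !big_filter; split.
  rewrite -lam1 [LHS]big_mkcond !big_seq; apply: eq_bigr => w ws.
  by case: ifPn => // /(lam0 w ws) ->.
rewrite yE [RHS]big_mkcond !big_seq; apply: eq_bigr => w ws.
by case: ifPn => // /(lam0 w ws) ->; rewrite scale0r.
Qed.

Lemma hull_const s x y : (forall w, w \in s -> w = x) -> in_hull s y -> y = x.
Proof.
move=> sx [lam [_ [lam1 ->]]].
have -> : \sum_(w <- s) lam w *: w = \sum_(w <- s) lam w *: x.
  by rewrite !big_seq; apply: eq_bigr => w /sx ->.
by rewrite -scaler_suml lam1 scale1r.
Qed.

Definition maximizers u s := [seq w <- s | all (fun w' => vdot u w' <= vdot u w) s].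

Lemma maximizers_neq_nil u s : s != [::] -> maximizers u s != [::].
Proof.
rewrite -has_filter; elim: s => [|a [|a' s] IH] // _; first by rewrite /= lexx.
have /hasP [w ws /allP w_max] := IH isT.
have [aw|wa] := leP (vdot u a) (vdot u w).
  apply/hasP; exists w; first by rewrite inE ws orbT.
  by apply/allP => w'; rewrite inE => /predU1P [-> // | /w_max].
apply/hasP; exists a; first exact: mem_head.
apply/allP => w'; rewrite inE => /predU1P [-> // | /w_max /le_trans]; apply.
exact: ltW.
Qed.

Lemma maximizers_hull u s x y z t : x \in maximizers u s ->
  in_hull s y -> in_hull s z -> 0 < t < 1 -> x = t *: y + (1 - t) *: z ->
  in_hull (maximizers u s) y /\ in_hull (maximizers u s) z.
Proof.
rewrite mem_filter => /andP [/allP x_max xs] hy hz /andP [t_gt0 t_lt1] xE.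
have le_x w : w \in s -> vdot u w <= vdot u x by move/x_max.
have uy := hull_vdot_le hy le_x; have uz := hull_vdot_le hz le_x.
have ux : vdot u x = t * vdot u y + (1 - t) * vdot u z by rewrite xE vdotDr !vdotZr.
have face_max w :
  w \in s -> vdot u w = vdot u x -> all (fun w' => vdot u w' <= vdot u w) s.
  by move=> _ ->; apply/allP.
by split; apply: (hull_filter _ le_x) face_max => //; nra.
Qed.

Definition lexmax (us : seq 'rV[F]_n) s := foldl (fun s u => maximizers u s) s us.

Lemma lexmax_cons u us s : lexmax (u :: us) s = lexmax us (maximizers u s).
Proof. by []. Qed.

Lemma lexmax_sub us s : {subset lexmax us s <= s}.
Proof. by elim: us s => [|u us IH] s // w /IH; rewrite mem_filter => /andP []. Qed.

Lemma lexmax_neq_nil us s : s != [::] -> lexmax us s != [::].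
Proof. by elim: us s => [|u us IH] s s_neq_nil //; apply/IH/maximizers_neq_nil. Qed.

Lemma lexmax_vdot_eq us s u w w' : w \in lexmax us s -> w' \in lexmax us s ->
  u \in us -> vdot u w = vdot u w'.
Proof.
elim: us s => [|u' us IH] s; first by move=> _ _; rewrite in_nil.
rewrite lexmax_cons => wl w'l.
rewrite inE => /predU1P [->|]; last exact: IH wl w'l.
move: (lexmax_sub wl) (lexmax_sub w'l); rewrite !mem_filter.
move=> /andP [/allP w_max ws] /andP [/allP w'_max w's].
by apply: le_anti; rewrite w_max ?w'_max.
Qed.

Lemma lexmax_hull us s x y z t : x \in lexmax us s ->
  in_hull s y -> in_hull s z -> 0 < t < 1 -> x = t *: y + (1 - t) *: z ->
  in_hull (lexmax us s) y /\ in_hull (lexmax us s) z.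
Proof.
elim: us s => [|u us IH] s //; rewrite lexmax_cons => xl hy hz t01 xE.
have [hy' hz'] := maximizers_hull (lexmax_sub xl) hy hz t01 xE.
exact: IH.
Qed.

Definition coords : seq 'rV[F]_n := [seq delta_mx 0 j | j <- enum 'I_n].

Lemma vdot_delta j x : vdot (delta_mx 0 j) x = x j 0.
Proof. by rewrite /vdot -rowE mxE. Qed.

Lemma lexmax_coords_eq us s w w' :
  w \in lexmax (us ++ coords) s -> w' \in lexmax (us ++ coords) s -> w = w'.
Proof.
move=> wl w'l; apply/matrixP => i j; rewrite ord1 -!vdot_delta.
by apply: (lexmax_vdot_eq wl w'l); rewrite mem_cat map_f ?mem_enum ?orbT.
Qed.

End ConvexHull.

Lemma in_cone_weights (F : realFieldType) (T : eqType) m (f : T -> 'cV[F]_m) s x :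
  uniq s -> in_cone (map f s) x ->
  exists2 lam : T -> F, (forall p, 0 <= lam p) & x = \sum_(p <- s) lam p *: f p.
Proof.
elim: s x => [x _ ->|p s IH x /andP [ps s_uniq] [c c_ge0]].
  by exists (fun=> 0); rewrite ?big_nil.
move=> /(IH _ s_uniq) [lam lam_ge0 xE].
exists (fun p' => if p' == p then c else lam p') => [p'|]; first by case: ifP.
rewrite big_cons eqxx -[x](subrK (c *: f p)) xE addrC; congr (_ + _).
rewrite !big_seq; apply: eq_bigr => p' p's.
by case: eqP => [p'p|//]; rewrite -p'p p's in ps.
Qed.

Section Separation.
Variables (F : realFieldType) (n : nat).
Implicit Types (x v : 'cV[F]_n) (s : seq 'cV[F]_n).

(* Homogenization: [v] lies in the hull of [s] iff [lift v] lies in the cone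
   spanned by the [lift p], [p \in s]. *)
Definition lift x : 'cV[F]_(n + 1) := col_mx x 1.

Lemma vdot_lift (u : 'rV[F]_(n + 1)) x :
  vdot u (lift x) = vdot (lsubmx u) x + rsubmx u 0 0.
Proof. by rewrite /vdot /lift -{1}(hsubmxK u) mul_row_col mulmx1 mxE. Qed.

Lemma in_cone_lift s v : uniq s -> in_cone (map lift s) (lift v) -> in_hull s v.
Proof.
move=> s_uniq /(in_cone_weights s_uniq) [lam lam_ge0 vE].
exists lam; split => [p _|]; first exact: lam_ge0.
have := congr1 usubmx vE; have := congr1 dsubmx vE.
rewrite !raddf_sum /= /lift col_mxKu col_mxKd.
under eq_bigr do rewrite scale_col_mx col_mxKd.
rewrite -scaler_suml => /(congr1 (fun A : 'M[F]_1 => A 0 0)).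
rewrite !mxE /= mulr1 => sum1 ->; split => //.
by apply: eq_bigr => p _; rewrite scale_col_mx col_mxKu.
Qed.

Lemma hull_separation s v : uniq s -> ~ in_hull s v ->
  exists u c, (forall p, p \in s -> vdot u p <= c) /\ c < vdot u v.
Proof.
move=> s_uniq v_out.
have [u [u_ge0 u_lt0]] := farkas (contra_not (in_cone_lift s_uniq) v_out).
exists (- lsubmx u), (rsubmx u 0 0); split => [p ps|]; rewrite vdotNl.
  by have := u_ge0 _ (map_f lift ps); rewrite vdot_lift; lra.
by move: u_lt0; rewrite vdot_lift; lra.
Qed.

End Separation.

Section Vertices.
Variables (R : realType) (n : nat).
Implicit Types (W P : {fset 'cV[R]_n}) (u : 'rV[R]_n) (v w x z : 'cV[R]_n).

Lemma in_convE W x : in_conv W x = in_hull W x.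
Proof. by []. Qed.

Lemma in_hull_conv P W z : (P `<=` W)%fset -> in_hull P z -> in_conv W z.
Proof.
move=> PW [lam [lam_ge0 [lam1 zE]]].
exists (fun w => if w \in P then lam w else 0); split => [w _|].
  by case: ifP => // /lam_ge0.
split.
  rewrite -lam1 -(big_fset_incl _ PW) => [|w _ /negbTE -> //].
  by rewrite !big_seq; apply: eq_bigr => w ->.
rewrite zE -(big_fset_incl _ PW) => [|w _ /negbTE ->]; last exact: scale0r.
by rewrite !big_seq; apply: eq_bigr => w ->.
Qed.

Lemma vertex_notin_hull W P v :
  is_vertex W v -> (P `<=` W)%fset -> v \notin P -> ~ in_hull P v.
Proof.
move=> [_ v_ext] PW vNP [lam [lam_ge0 [lam1 vE]]].
have /hasP [p0 p0P lam_p0_gt0] : has (fun p => 0 < lam p) P.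
  apply: contraT => /hasPn lam_le0; move: lam1; rewrite big_seq big1 => [/eqP|p pP].
    by rewrite eq_sym oner_eq0.
  by apply/eqP; rewrite eq_le lam_ge0 // andbT leNgt lam_le0.
have lam_p0_le1 : lam p0 <= 1.
  rewrite -lam1 (big_rem p0) //= lerDl big_seq sumr_ge0 // => p /mem_rem.
  exact: lam_ge0.
(* Split off half of the weight of [p0]: v = t p0 + (1 - t) z with z in the hull. *)
pose t := lam p0 / 2.
have t_gt0 : 0 < t by rewrite divr_gt0.
have t_lt1 : t < 1 by rewrite /t; lra.
have t01 : 0 < t < 1 by rewrite t_gt0 t_lt1.
pose mu p := (lam p - t *+ (p == p0)) / (1 - t).
have mu_ge0 p : p \in P -> 0 <= mu p.
  move=> pP; rewrite divr_ge0 ?subr_ge0 ?(ltW t_lt1) //.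
  by case: eqP => [->|_]; rewrite ?mulr1n ?mulr0n ?subr0 ?lam_ge0 // /t; lra.
have mu1 : \sum_(p <- P) mu p = 1.
  rewrite -mulr_suml sumrB lam1 (big_seq_pred1 (fun=> t)) ?fset_uniq //.
  by rewrite divff // subr_eq0 gt_eqF.
have vE' : v = t *: p0 + (1 - t) *: \sum_(p <- P) mu p *: p.
  rewrite scaler_sumr (eq_bigr (fun p => lam p *: p - (t *: p) *+ (p == p0))).
    by rewrite sumrB (big_seq_pred1 (fun p => t *: p)) ?fset_uniq // -vE addrC subrK.
  move=> p _; rewrite scalerA mulrCA divff ?subr_eq0 ?gt_eqF // mulr1.
  by rewrite scalerBl scalerMnl.
have p0W : in_conv W p0.
  by rewrite in_convE; apply: in_hull_mem (fset_uniq W) (fsubsetP PW _ p0P).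
have muW : in_conv W (\sum_(p <- P) mu p *: p).
  by apply: (in_hull_conv PW); exists mu.
have [p0v _] := v_ext _ _ _ p0W muW t01 vE'.
by move: vNP; rewrite -p0v p0P.
Qed.

Lemma vertex_mem W v : is_vertex W v -> v \in W.
Proof.
move=> vW; apply: contraT => vNW; exfalso.
by apply: (vertex_notin_hull vW (fsubset_refl W) vNW); rewrite -in_convE; case: vW.
Qed.

Lemma vertex_separation W P v :
  is_vertex W v -> (P `<=` W)%fset -> v \notin P ->
  exists u c, (forall p, p \in P -> vdot u p <= c) /\ c < vdot u v.
Proof.
move=> vW PW vNP.
exact: hull_separation (fset_uniq P) (vertex_notin_hull vW PW vNP).
Qed.

Lemma exists_vertex_max W u w0 :
  w0 \in W -> exists2 x, vdot u w0 <= vdot u x & is_vertex W x.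
Proof.
move=> w0W; have w0s : w0 \in (W : seq _) by [].
have W_neq_nil : (W : seq _) != [::] by apply: contraTneq w0s => ->.
have := lexmax_neq_nil (u :: coords R n) W_neq_nil.
case lexE: (lexmax (u :: coords R n) W) => [//|x r] _.
have xl : x \in lexmax (u :: coords R n) W by rewrite lexE mem_head.
have /lexmax_sub : x \in lexmax (coords R n) (maximizers u W) by rewrite -lexmax_cons.
rewrite mem_filter => /andP [/allP x_max xW].
exists x; first exact: x_max.
split => [|y z t]; rewrite !in_convE; first exact: in_hull_mem (fset_uniq W) xW.
move=> hy hz t01 xE; have [hy' hz'] := lexmax_hull xl hy hz t01 xE.
have lex_x w : w \in lexmax (u :: coords R n) W -> w = x.
  by move=> wl; apply: (lexmax_coords_eq (us := [:: u])) wl xl.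
by split; apply: hull_const lex_x _.
Qed.

End Vertices.

Local Open Scope fset_scope.

Section DataCompression.
Variables (R : realType) (ns na q : nat).
Variables (A : 'M[R]_ns) (B : 'M[R]_(ns, na)) (b : 'cV[R]_ns).
Implicit Types (D Dh : {fset transition R ns na}) (th : 'M[R]_(q, ns) * 'cV[R]_q).

Lemma mulmx_vdot (M : 'M[R]_(q, ns)) w i : (M *m w) i 0 = vdot (row i M) w.
Proof. by rewrite /vdot -row_mul [RHS]mxE. Qed.

Lemma Wset_sub Dh D : Dh `<=` D -> Wset A B b Dh `<=` Wset A B b D.
Proof. by move=> /fsubsetP DhD; apply: subset_imfset. Qed.

Lemma in_S_sub Dh D th : Dh `<=` D -> in_S A B b D th -> in_S A B b Dh th.
Proof. by move=> /Wset_sub /fsubsetP DhD hS w /DhD; apply: hS. Qed.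

Lemma in_S_vertices D Dh th :
  (forall v, is_vertex (Wset A B b D) v -> v \in Wset A B b Dh) ->
  in_S A B b Dh th -> in_S A B b D th.
Proof.
move=> vertDh hS w wD i; rewrite mulmx_vdot.
have [x le_wx /vertDh xDh] := exists_vertex_max (row i th.1) wD.
by apply: le_trans le_wx _; rewrite -mulmx_vdot hS.
Qed.

Lemma vertex_mem_Wset (q_gt0 : (0 < q)%N) D Dh v :
  Dh `<=` D -> same_S q A B b Dh D -> is_vertex (Wset A B b D) v ->
  v \in Wset A B b Dh.
Proof.
move=> DhD SDh vD; apply: contraT => vNDh.
have [u [c [le_c lt_c]]] := vertex_separation vD (Wset_sub DhD) vNDh.
pose th : 'M[R]_(q, ns) * 'cV[R]_q := (\matrix_(i < q) u, const_mx c).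
have th_row i w : ((th.1 *m w) i 0 <= th.2 i 0) = (vdot u w <= c).
  by rewrite mulmx_vdot rowK mxE.
have /(SDh th) thD : in_S A B b Dh th by move=> w wDh i; rewrite th_row le_c.
by have := thD v (vertex_mem vD) (Ordinal q_gt0); rewrite th_row leNgt lt_c.
Qed.

End DataCompression.

Theorem theorem1 (R : realType) (ns na q : nat)
  (A : 'M[R]_ns) (B : 'M[R]_(ns, na)) (b : 'cV[R]_ns) (hq : (1 <= q)%N)
  (D Dbar : {fset transition R ns na})
  (hsub : Dbar `<=` D)
  (hvert : forall t, t \in Dbar -> is_vertex (Wset A B b D) (noise A B b t))
  (hcover : forall v, is_vertex (Wset A B b D) v ->
              exists2 t, t \in Dbar & noise A B b t = v)
  (hinj : {in Dbar &, injective (noise A B b)}) :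
  optimal_compression q A B b D Dbar.
Proof.
have vert_Dbar v : is_vertex (Wset A B b D) v -> v \in Wset A B b Dbar.
  by move=> /hcover [t tDbar <-]; apply: in_imfset.
split => //; split => [th | Dh DhD SDh].
  by split; [exact: in_S_vertices vert_Dbar | exact: in_S_sub].
have WDbar_sub : Wset A B b Dbar `<=` Wset A B b Dh.
  apply/fsubsetP => _ /imfsetP [t /= tDbar ->].
  by apply: (vertex_mem_Wset hq DhD SDh); apply: hvert.
have card_WDbar : #|` Wset A B b Dbar| = #|` Dbar| by rewrite /Wset card_in_imfset.
rewrite -card_WDbar (leq_trans (fsubset_leq_card WDbar_sub)) //.
exact: leq_imfset_card.
Qed.
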